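(* Against an oblivious adversary, if one of the two robots has zero wait time and zero computation delay in every cycle (while the other robot's wait times and computation delays are arbitrary nonnegative values chosen by the adversary), and the algorithm knows the speed ratio $\alpha$ of the robots, then it is possible to gather the two robots: there is a randomized algorithm such that the robots gather with positive probability.
   Context: Two robots are anonymous, oblivious (no memory of past cycles), silent (no communication) points in the Euclidean plane with no common coordinate system, each having access to random bits and moving at its own constant speed; $\alpha$ is the ratio of their speeds. Each robot repeatedly executes a cycle: it waits (wait time $\mathcal{W}$), looks (obtains a snapshot of the other robot's current position, which may be in motion), has a computation delay $\mathcal{C}$, then moves to a destination computed from the snapshot and its random bits, reaching it in the same cycle (rigid movement). A robot that looks and finds the other robot at its own position decides it has gathered and stops; gathering means both robots are at the same point. The scheduler is an adversary choosing wait times and computation delays; an oblivious adversary knows the algorithm but not the outcomes of random bits, so it fixes all these sequences before the execution. *)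

From Stdlib Require Import Reals.
Open Scope R_scope.

Definition point : Type := (R * R)%type.
Definition padd (p q : point) : point := (fst p + fst q, snd p + snd q).
Definition psub (p q : point) : point := (fst p - fst q, snd p - snd q).
Definition pscal (a : R) (p : point) : point := (a * fst p, a * snd p).
Definition dist (p q : point) : R :=
  sqrt ((fst p - fst q) ^ 2 + (snd p - snd q) ^ 2).

(** Robots are indexed by [bool]; the other robot of [i] is [negb i]. *)

(** An (anonymous, oblivious) randomized algorithm: given, in the robot's
    local coordinate system, its own position and the snapshot of the other
    robot's position, and the random bits of the current cycle, it outputs
    the destination (in local coordinates).  Both robots run the same one. *)
Definition algorithm : Type := point -> point -> (nat -> bool) -> point.

(** Random bits: [om i k j] is the j-th random bit of robot [i] in cycle [k]
    (independent fair bits). *)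
Definition randomness : Type := bool -> nat -> nat -> bool.

(** Everything an oblivious adversary fixes before the execution:
    initial positions, speeds, wait times, computation delays, and the local
    coordinate system (a similarity of the plane, with its inverse) used by
    each robot in each cycle. *)
Record adversary : Type := Adversary {
  init : bool -> point;
  speed : bool -> R;
  wait : bool -> nat -> R;
  delay : bool -> nat -> R;
  frame : bool -> nat -> point -> point;
  frame_inv : bool -> nat -> point -> point
}.

Definition is_similarity (f : point -> point) : Prop :=
  exists s, 0 < s /\ forall x y, dist (f x) (f y) = s * dist x y.

Definition admissible (alpha : R) (adv : adversary) (z : bool) : Prop :=
  0 < speed adv false /\ 0 < speed adv true /\
  speed adv false = alpha * speed adv true /\
  (forall i k, 0 <= wait adv i k /\ 0 <= delay adv i k) /\
  (forall k, wait adv z k = 0 /\ delay adv z k = 0) /\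
  (forall i k, is_similarity (frame adv i k) /\
     (forall x, frame_inv adv i k (frame adv i k x) = x) /\
     (forall x, frame adv i k (frame_inv adv i k x) = x)).

(** An execution: start time and start position of every cycle of every
    robot, and the trajectories of the robots. *)
Record execution : Type := Execution {
  start : bool -> nat -> R;
  spos : bool -> nat -> point;
  pos : bool -> R -> point
}.

Definition look_time (adv : adversary) (e : execution) (i : bool) (k : nat) : R :=
  start e i k + wait adv i k.

Definition snapshot (adv : adversary) (e : execution) (i : bool) (k : nat) : point :=
  pos e (negb i) (look_time adv e i k).

Definition stops_at (adv : adversary) (e : execution) (i : bool) (k : nat) : Prop :=
  snapshot adv e i k = spos e i k.

Definition active (adv : adversary) (e : execution) (i : bool) (k : nat) : Prop :=
  forall j, (j < k)%nat -> ~ stops_at adv e i j.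

Definition destination (A : algorithm) (adv : adversary) (om : randomness)
    (e : execution) (i : bool) (k : nat) : point :=
  frame_inv adv i k
    (A (frame adv i k (spos e i k)) (frame adv i k (snapshot adv e i k)) (om i k)).

(** [e] is an execution of algorithm [A] under adversary [adv] with random
    bits [om]: cycle = wait, look, compute, rigid straight move at the robot's
    constant speed; a robot seeing the other at its own position stops forever. *)
Definition is_execution (A : algorithm) (adv : adversary) (om : randomness)
    (e : execution) : Prop :=
  (forall i, start e i 0 = 0 /\ spos e i 0 = init adv i) /\
  (forall i k, active adv e i k ->
    (stops_at adv e i k ->
       forall t, start e i k <= t -> pos e i t = spos e i k) /\
    (~ stops_at adv e i k ->
       let P := spos e i k in
       let D := destination A adv om e i k in
       let M := look_time adv e i k + delay adv i k in
       let E := M + dist P D / speed adv i in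
       start e i (S k) = E /\ spos e i (S k) = D /\
       (forall t, start e i k <= t <= M -> pos e i t = P) /\
       (forall t, M <= t <= E ->
          pos e i t = padd P (pscal ((t - M) * speed adv i / dist P D) (psub D P))))).

Definition gathered (adv : adversary) (e : execution) : Prop :=
  exists k0 k1,
    active adv e false k0 /\ stops_at adv e false k0 /\
    active adv e true k1 /\ stops_at adv e true k1 /\
    spos e false k0 = spos e true k1.

(* The algorithm moves a robot a randomly chosen fraction of the way toward the observed
   position of the other one; the fraction is one of 1, 0, beta = alpha / (1 + alpha)^2 and
   the two candidate meeting ratios v / (v + v').  It commutes with similarities, so both
   robots stay on the segment between their initial positions W (of the robot w that may
   wait) and Z (of the robot z that never waits).  Let d be the initial distance and M0 the
   time at which w ends its first computation.
   - If d <= v_z M0, z walks to W (fraction 1) while w stays (fraction 0): z arrives before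
     w moves, stops there, and w stops as soon as it looks again.
   - Otherwise z approaches W by steps of fraction beta until its first look at or after
     M0.  It then sees w walking (fraction 1) toward the point where w saw z, and the choice
     of beta guarantees that w has not yet passed z.  With the meeting ratio z walks to the
     point where the two robots cross, stops there, and w reaches it within two cycles.
   Each run uses the random bits of finitely many cycles only; fixing them is an event of
   positive probability. *)

From Stdlib Require Import Reals Lra Lia Classical Wf_nat.
Open Scope R_scope.

(** * Geometry of the plane *)

Lemma dist_sq (x y : point) : dist x y ^ 2 = (fst x - fst y) ^ 2 + (snd x - snd y) ^ 2.
Proof.
  unfold dist. rewrite <- Rsqr_pow2. apply Rsqr_sqrt.
  apply Rplus_le_le_0_compat; apply pow2_ge_0.
Qed.

Lemma dist_nonneg (x y : point) : 0 <= dist x y.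
Proof. apply sqrt_pos. Qed.

Lemma dist_eq0 (x y : point) : dist x y = 0 -> x = y.
Proof.
  intros H. pose proof (dist_sq x y) as Hsq. rewrite H in Hsq.
  destruct x as [x1 x2], y as [y1 y2]; cbn [fst snd] in Hsq.
  pose proof (pow2_ge_0 (x1 - y1)). pose proof (pow2_ge_0 (x2 - y2)).
  assert (x1 - y1 = 0) by (apply Rsqr_0_uniq; rewrite Rsqr_pow2; lra).
  assert (x2 - y2 = 0) by (apply Rsqr_0_uniq; rewrite Rsqr_pow2; lra).
  f_equal; lra.
Qed.

Definition line (W u : point) (s : R) : point := padd W (pscal s u).

Definition unit_vector (u : point) : Prop := fst u ^ 2 + snd u ^ 2 = 1.

Definition direction (W Z : point) : point := pscal (/ dist W Z) (psub Z W).

Lemma line_affine W u a b l :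
  padd (line W u a) (pscal l (psub (line W u b) (line W u a))) = line W u (a + l * (b - a)).
Proof. unfold line, padd, pscal, psub; cbn [fst snd]; f_equal; ring. Qed.

Lemma dist_line W u a b : unit_vector u -> dist (line W u a) (line W u b) = Rabs (a - b).
Proof.
  intros Hu. unfold dist, line, padd, pscal; cbn [fst snd].
  replace (_ + _) with (Rsqr (a - b) * (fst u ^ 2 + snd u ^ 2)) by (unfold Rsqr; ring).
  rewrite Hu, Rmult_1_r. apply sqrt_Rsqr_abs.
Qed.

Lemma line_inj W u a b : unit_vector u -> line W u a = line W u b -> a = b.
Proof.
  intros Hu H. pose proof (dist_line W u a b Hu) as Hd.
  rewrite H in Hd. unfold dist in Hd. rewrite !Rminus_diag, pow_i, Rplus_0_r, sqrt_0 in Hd by lia.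
  destruct (Req_dec a b) as [|Hab]; [assumption|].
  pose proof (Rabs_pos_lt (a - b)). lra.
Qed.

Lemma unit_direction W Z : 0 < dist W Z -> unit_vector (direction W Z).
Proof.
  intros Hd. pose proof (dist_sq W Z) as Hsq. unfold unit_vector, direction, pscal, psub; cbn [fst snd].
  replace (_ + _) with (((fst W - fst Z) ^ 2 + (snd W - snd Z) ^ 2) / dist W Z ^ 2)
    by (field; lra).
  rewrite <- Hsq. field. lra.
Qed.

Lemma line_direction_0 W Z : line W (direction W Z) 0 = W.
Proof. unfold line, direction, padd, pscal, psub; destruct W; cbn [fst snd]; f_equal; ring. Qed.

Lemma line_direction_dist W Z : 0 < dist W Z -> line W (direction W Z) (dist W Z) = Z.
Proof.
  intros Hd. unfold line, direction, padd, pscal, psub; destruct W, Z; cbn [fst snd].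
  f_equal; field; lra.
Qed.

(* The image of [X = p + l (q - p)] lies at distances [|l| s D] and [|1 - l| s D] from [f p]
   and [f q], which are [s D] apart: the equality case of the triangle inequality, here in
   the form of the identity [Hdefect]. *)
Lemma similarity_affine (f : point -> point) p q l : is_similarity f ->
  f (padd p (pscal l (psub q p))) = padd (f p) (pscal l (psub (f q) (f p))).
Proof.
  intros [s [Hs Hf]].
  set (X := padd p (pscal l (psub q p))).
  assert (Hsq : forall x y, dist (f x) (f y) ^ 2 = s ^ 2 * dist x y ^ 2)
    by (intros x y; rewrite Hf; ring).
  pose proof (Hsq p X) as HpX. pose proof (Hsq X q) as HXq. pose proof (Hsq p q) as Hpq.
  rewrite !dist_sq in HpX, HXq, Hpq.
  destruct (f p) as [a1 a2], (f X) as [x1 x2], (f q) as [b1 b2].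
  subst X. destruct p as [p1 p2], q as [q1 q2].
  unfold padd, pscal, psub in *; cbn [fst snd] in *.
  set (D := (p1 - q1) ^ 2 + (p2 - q2) ^ 2) in *.
  set (e1 := x1 - a1 - l * (b1 - a1)). set (e2 := x2 - a2 - l * (b2 - a2)).
  assert (Hdefect : e1 ^ 2 + e2 ^ 2 =
    (1 - l) ^ 2 * ((a1 - x1) ^ 2 + (a2 - x2) ^ 2) + l ^ 2 * ((x1 - b1) ^ 2 + (x2 - b2) ^ 2)
    - l * (1 - l) * (((a1 - b1) ^ 2 + (a2 - b2) ^ 2) - ((a1 - x1) ^ 2 + (a2 - x2) ^ 2)
                     - ((x1 - b1) ^ 2 + (x2 - b2) ^ 2))) by (unfold e1, e2; ring).
  rewrite HpX, HXq, Hpq in Hdefect.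
  replace (_ - _) with 0 in Hdefect by (unfold D; ring).
  assert (e1 = 0) by nra. assert (e2 = 0) by nra.
  unfold e1, e2 in *. f_equal; lra.
Qed.

(* The point at distance [x] from [a] in the direction of [b]; it is [a] when [a = b]
   since [x / 0 = 0]. *)
Definition toward (a b x : R) : R := a + x / Rabs (a - b) * (b - a).

Lemma toward_down a b x : b < a -> toward a b x = a - x.
Proof. intros H. unfold toward. rewrite Rabs_right by lra. field. lra. Qed.

Lemma toward_up a b x : a < b -> toward a b x = a + x.
Proof. intros H. unfold toward. rewrite Rabs_left by lra. field. lra. Qed.

Lemma toward_self a x : toward a a x = a.
Proof. unfold toward. ring. Qed.

Lemma toward_start a b : toward a b 0 = a.
Proof. unfold toward. unfold Rdiv. ring. Qed.

Lemma toward_end a b : toward a b (Rabs (a - b)) = b.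
Proof.
  destruct (Req_dec a b) as [<-|Hab]; [apply toward_self|].
  unfold toward. field. apply Rabs_no_R0. lra.
Qed.

Definition ramp (a b M v t : R) : R :=
  if Rle_dec t M then a
  else if Rle_dec (M + Rabs (a - b) / v) t then b
  else toward a b ((t - M) * v).

Lemma ramp_before a b M v t : t <= M -> ramp a b M v t = a.
Proof. intros Ht. unfold ramp. destruct (Rle_dec t M); [reflexivity|lra]. Qed.

Lemma ramp_moving a b M v t : 0 < v -> M <= t <= M + Rabs (a - b) / v ->
  ramp a b M v t = toward a b ((t - M) * v).
Proof.
  intros Hv Ht. unfold ramp. destruct (Rle_dec t M).
  - replace t with M by lra. rewrite Rminus_diag, Rmult_0_l. symmetry. apply toward_start.
  - destruct (Rle_dec (M + Rabs (a - b) / v) t); [|reflexivity].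
    replace ((t - M) * v) with (Rabs (a - b)) by (replace t with (M + Rabs (a - b) / v) by lra; field; lra).
    symmetry. apply toward_end.
Qed.

Lemma ramp_after a b M v t : 0 < v -> M + Rabs (a - b) / v <= t -> ramp a b M v t = b.
Proof.
  intros Hv Ht. unfold ramp. destruct (Rle_dec t M).
  - destruct (Req_dec a b) as [|Hab]; [assumption|].
    assert (0 < Rabs (a - b) / v) by (apply Rdiv_lt_0_compat; [apply Rabs_pos_lt|]; lra).
    lra.
  - destruct (Rle_dec (M + Rabs (a - b) / v) t); [reflexivity|lra].
Qed.

(** * The algorithm *)

Definition fraction_algorithm (r : (nat -> bool) -> R) : algorithm :=
  fun p q b => padd p (pscal (r b) (psub q p)).

(* [step_ratio alpha * v' <= (1 - step_ratio alpha) * v] whenever [v' / v] is [alpha] or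
   [1 / alpha]: while one robot covers the fraction [step_ratio alpha] of its distance to
   the start of the other one, the other one covers less than the remaining distance. *)
Definition step_ratio (alpha : R) : R := alpha / ((1 + alpha) * (1 + alpha)).

(* The first three random bits select the fraction of the way to the observed position:
   1, 0, the step ratio, or one of the two candidate meeting ratios [v / (v + v')] (the
   robots are anonymous, so the ratio must be offered for both speed orders). *)
Definition ratio (alpha : R) (b : nat -> bool) : R :=
  if b 0%nat then (if b 1%nat then 1 else 0)
  else if b 1%nat then (if b 2%nat then step_ratio alpha else 1 / (1 + alpha))
  else alpha / (1 + alpha).

Definition gathering_algorithm (alpha : R) : algorithm := fraction_algorithm (ratio alpha).

Definition bits3 (b0 b1 b2 : bool) : nat -> bool :=
  fun j => match j with 0%nat => b0 | 1%nat => b1 | 2%nat => b2 | _ => false end.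

Definition meet_bits (z : bool) : nat -> bool :=
  if z then bits3 false true false else bits3 false false false.

Lemma step_ratio_bounds alpha : 0 < alpha -> 0 < step_ratio alpha < 1.
Proof.
  intros Ha. unfold step_ratio. split.
  - apply Rdiv_lt_0_compat; nra.
  - apply Rmult_lt_reg_r with ((1 + alpha) * (1 + alpha)); [nra|].
    unfold Rdiv. rewrite Rmult_assoc, Rinv_l by nra. nra.
Qed.

Lemma step_ratio_speeds alpha v v' : 0 < alpha -> 0 < v -> 0 < v' ->
  v' = alpha * v \/ v = alpha * v' ->
  step_ratio alpha * v' <= (1 - step_ratio alpha) * v.
Proof.
  intros Ha Hv Hv' Hvv. unfold step_ratio.
  assert (Hq : 0 < (1 + alpha) * (1 + alpha)) by nra.
  apply Rmult_le_reg_r with ((1 + alpha) * (1 + alpha)); [exact Hq|].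
  destruct Hvv as [-> | ->]; field_simplify; nra.
Qed.

Lemma ratio_meet_bits alpha (v : bool -> R) z : 0 < alpha -> 0 < v true ->
  v false = alpha * v true -> ratio alpha (meet_bits z) = v z / (v z + v (negb z)).
Proof.
  intros Ha Hv Hvv. destruct z; cbn; rewrite Hvv; field; nra.
Qed.

Lemma ratio_prefix alpha (b b' : nat -> bool) :
  (forall j, (j < 3)%nat -> b j = b' j) -> ratio alpha b = ratio alpha b'.
Proof. intros H. unfold ratio. rewrite !H by lia. reflexivity. Qed.

Definition prefix_agree (N : nat) (om rho : randomness) : Prop :=
  forall i k j, (k < N)%nat -> (j < N)%nat -> om i k j = rho i k j.

(* The random bits agreeing with [rho] on the first [N] bits of the first [N] cycles of
   both robots form an event of probability [2 ^ (- 2 N ^ 2) > 0]. *)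
Definition gathers_on_cylinder (A : algorithm) (adv : adversary) : Prop :=
  exists (N : nat) (rho : randomness), forall om : randomness, prefix_agree N om rho ->
    (exists e, is_execution A adv om e) /\
    (forall e, is_execution A adv om e -> gathered adv e).

Lemma ratio_on_cylinder alpha N om rho i k : (3 <= N)%nat -> (k < N)%nat ->
  prefix_agree N om rho -> ratio alpha (om i k) = ratio alpha (rho i k).
Proof. intros HN Hk Hom. apply ratio_prefix. intros j Hj. apply Hom; lia. Qed.

(** * Executions *)

Definition by_robot {T : Type} (z : bool) (x y : T) : bool -> T :=
  fun i => if Bool.eqb i z then x else y.

Lemma by_robot_self {T : Type} z (x y : T) : by_robot z x y z = x.
Proof. unfold by_robot. rewrite Bool.eqb_reflx. reflexivity. Qed.

Lemma by_robot_other {T : Type} z (x y : T) : by_robot z x y (negb z) = y.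
Proof. destruct z; reflexivity. Qed.

Lemma robot_cases (i z : bool) : i = z \/ i = negb z.
Proof. destruct i, z; auto. Qed.

Definition similarity_frames (adv : adversary) : Prop :=
  forall i k, is_similarity (frame adv i k) /\
    (forall x, frame_inv adv i k (frame adv i k x) = x).

Lemma destination_fraction r adv om e i k : similarity_frames adv ->
  destination (fraction_algorithm r) adv om e i k =
  padd (spos e i k) (pscal (r (om i k)) (psub (snapshot adv e i k) (spos e i k))).
Proof.
  intros Hfr. destruct (Hfr i k) as [Hsim Hinv].
  unfold destination, fraction_algorithm. rewrite <- similarity_affine by exact Hsim.
  apply Hinv.
Qed.

Definition valid_cycle (A : algorithm) (adv : adversary) (om : randomness)
    (e : execution) (i : bool) (k : nat) : Prop :=
  (stops_at adv e i k ->
     forall t, start e i k <= t -> pos e i t = spos e i k) /\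
  (~ stops_at adv e i k ->
     let P := spos e i k in
     let D := destination A adv om e i k in
     let M := look_time adv e i k + delay adv i k in
     let E := M + dist P D / speed adv i in
     start e i (S k) = E /\ spos e i (S k) = D /\
     (forall t, start e i k <= t <= M -> pos e i t = P) /\
     (forall t, M <= t <= E ->
        pos e i t = padd P (pscal ((t - M) * speed adv i / dist P D) (psub D P)))).

Lemma active_0 adv e i : active adv e i 0.
Proof. intros j Hj. lia. Qed.

Lemma active_S adv e i k : active adv e i k -> ~ stops_at adv e i k -> active adv e i (S k).
Proof. intros Ha Hn j Hj. destruct (Nat.eq_dec j k) as [->|]; [exact Hn | apply Ha; lia]. Qed.

Lemma inactive_after_stop adv e i k k' : stops_at adv e i k -> (k < k')%nat -> ~ active adv e i k'.
Proof. intros Hs Hk Ha. exact (Ha k Hk Hs). Qed.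

Lemma execution_valid_cycle A adv om e i k :
  is_execution A adv om e -> active adv e i k -> valid_cycle A adv om e i k.
Proof. intros [_ H]. apply H. Qed.

Lemma valid_cycle_stop A adv om e i k : stops_at adv e i k ->
  valid_cycle A adv om e i k <-> forall t, start e i k <= t -> pos e i t = spos e i k.
Proof.
  intros Hs. split.
  - intros [H _]. exact (H Hs).
  - intros H. split; [intros _; exact H | intros Hns; contradiction].
Qed.

Lemma line_not_stops adv e i k W u a b : unit_vector u ->
  spos e i k = line W u a -> snapshot adv e i k = line W u b -> a <> b -> ~ stops_at adv e i k.
Proof.
  intros Hu Hp Hs Hab. unfold stops_at. rewrite Hp, Hs. intros H.
  exact (Hab (eq_sym (line_inj W u b a Hu H))).
Qed.

Lemma valid_cycle_on_line r adv om e i k W u a b a' M E :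
  similarity_frames adv -> unit_vector u ->
  spos e i k = line W u a -> snapshot adv e i k = line W u b -> a <> b ->
  a' = a + r (om i k) * (b - a) ->
  M = look_time adv e i k + delay adv i k ->
  E = M + Rabs (a - a') / speed adv i ->
  valid_cycle (fraction_algorithm r) adv om e i k <->
  start e i (S k) = E /\ spos e i (S k) = line W u a' /\
  (forall t, start e i k <= t <= M -> pos e i t = line W u a) /\
  (forall t, M <= t <= E -> pos e i t = line W u (toward a a' ((t - M) * speed adv i))).
Proof.
  intros Hfr Hu Hp Hs Hab Ha' HM HE.
  pose proof (line_not_stops adv e i k W u a b Hu Hp Hs Hab) as Hns.
  assert (Hpath : forall x, padd (line W u a)
     (pscal (x / Rabs (a - a')) (psub (line W u a') (line W u a))) = line W u (toward a a' x))
    by (intros x; apply line_affine).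
  unfold valid_cycle. cbv zeta.
  rewrite destination_fraction, Hp, Hs, line_affine, <- Ha', dist_line, <- HM, <- HE by assumption.
  split.
  - intros [_ H]. destruct (H Hns) as (H1 & H2 & H3 & H4).
    repeat split; try assumption. intros t Ht. rewrite H4 by exact Ht. apply Hpath.
  - intros (H1 & H2 & H3 & H4). split; [intros Hst; contradiction|]. intros _.
    repeat split; try assumption. intros t Ht. rewrite H4 by exact Ht. symmetry. apply Hpath.
Qed.

Lemma execution_on_line r adv om e i k W u a b a' M E :
  is_execution (fraction_algorithm r) adv om e -> active adv e i k ->
  similarity_frames adv -> unit_vector u ->
  spos e i k = line W u a -> snapshot adv e i k = line W u b -> a <> b ->
  a' = a + r (om i k) * (b - a) ->
  M = look_time adv e i k + delay adv i k ->
  E = M + Rabs (a - a') / speed adv i ->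
  active adv e i (S k) /\ start e i (S k) = E /\ spos e i (S k) = line W u a' /\
  (forall t, M <= t <= E -> pos e i t = line W u (toward a a' ((t - M) * speed adv i))).
Proof.
  intros He Hact Hfr Hu Hp Hs Hab Ha' HM HE.
  pose proof (line_not_stops adv e i k W u a b Hu Hp Hs Hab) as Hns.
  pose proof (execution_valid_cycle _ _ _ _ _ _ He Hact) as Hv.
  rewrite (valid_cycle_on_line r adv om e i k W u a b a' M E) in Hv by assumption.
  destruct Hv as (H1 & H2 & _ & H4). repeat split; try assumption.
  apply active_S; assumption.
Qed.

Lemma execution_stop A adv om e i k : is_execution A adv om e -> active adv e i k ->
  stops_at adv e i k -> forall t, start e i k <= t -> pos e i t = spos e i k.
Proof.
  intros He Hact Hs. rewrite <- (valid_cycle_stop A adv om e i k Hs).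
  exact (execution_valid_cycle A adv om e i k He Hact).
Qed.

Lemma execution_init A adv om e i :
  is_execution A adv om e -> start e i 0 = 0 /\ spos e i 0 = init adv i.
Proof. intros [H _]. apply H. Qed.

Lemma execution_rest A adv om e i k : is_execution A adv om e -> active adv e i k ->
  forall t, start e i k <= t <= look_time adv e i k + delay adv i k -> pos e i t = spos e i k.
Proof.
  intros He Ha t Ht. destruct (execution_valid_cycle A adv om e i k He Ha) as [Hs Hn].
  destruct (classic (stops_at adv e i k)) as [S|S].
  - apply Hs; [exact S | lra].
  - apply (Hn S). exact Ht.
Qed.

Lemma execution_rest_0 A adv om e i : is_execution A adv om e ->
  forall t, 0 <= t <= wait adv i 0 + delay adv i 0 -> pos e i t = init adv i.
Proof.
  intros He t Ht. destruct (execution_init A adv om e i He) as [H0 Hp0].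
  rewrite <- Hp0. apply (execution_rest A adv om e i 0 He (active_0 adv e i)).
  unfold look_time. rewrite H0. lra.
Qed.

Lemma snapshot_other adv e i k :
  snapshot adv e (negb i) k = pos e i (look_time adv e (negb i) k).
Proof. unfold snapshot. rewrite Bool.negb_involutive. reflexivity. Qed.

Lemma gathered_intro adv e z kz kw :
  active adv e z kz -> stops_at adv e z kz ->
  active adv e (negb z) kw -> stops_at adv e (negb z) kw ->
  spos e z kz = spos e (negb z) kw -> gathered adv e.
Proof. destruct z; intros; [exists kw, kz | exists kz, kw]; repeat split; auto. Qed.

Lemma admissible_speed alpha adv z i : admissible alpha adv z -> 0 < speed adv i.
Proof. intros (H1 & H2 & _). destruct i; assumption. Qed.

Lemma admissible_speed_ratio alpha adv z : admissible alpha adv z ->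
  speed adv false = alpha * speed adv true.
Proof. intros (_ & _ & H & _). exact H. Qed.

Lemma admissible_wait alpha adv z i k : admissible alpha adv z -> 0 <= wait adv i k.
Proof. intros (_ & _ & _ & H & _). apply H. Qed.

Lemma admissible_delay alpha adv z i k : admissible alpha adv z -> 0 <= delay adv i k.
Proof. intros (_ & _ & _ & H & _). apply H. Qed.

Lemma admissible_eager alpha adv z k : admissible alpha adv z ->
  wait adv z k = 0 /\ delay adv z k = 0.
Proof. intros (_ & _ & _ & _ & H & _). apply H. Qed.

Lemma admissible_frames alpha adv z : admissible alpha adv z -> similarity_frames adv.
Proof. intros (_ & _ & _ & _ & _ & H) i k. destruct (H i k) as (Hs & Hi & _). split; assumption. Qed.

(** * The gathering scenarios *)

Section Scenarios.

Variables (alpha : R) (adv : adversary) (z : bool).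
Hypotheses (alpha_pos : 0 < alpha) (adm : admissible alpha adv z).

Local Notation w := (negb z).
Local Notation vz := (speed adv z).
Local Notation vw := (speed adv w).
Local Notation A := (gathering_algorithm alpha).
Local Notation M0 := (wait adv w 0 + delay adv w 0).
Local Notation W := (init adv w).
Local Notation Z := (init adv z).
Local Notation d := (dist W Z).
Local Notation L := (line W (direction W Z)).

Let vz_pos : 0 < vz := admissible_speed alpha adv z z adm.
Let vw_pos : 0 < vw := admissible_speed alpha adv z w adm.
Let frames : similarity_frames adv := admissible_frames alpha adv z adm.
Let wait_nonneg k : 0 <= wait adv w k := admissible_wait alpha adv z w k adm.
Let delay_nonneg k : 0 <= delay adv w k := admissible_delay alpha adv z w k adm.

Lemma look_time_eager e k : look_time adv e z k = start e z k.
Proof. unfold look_time. rewrite (proj1 (admissible_eager alpha adv z k adm)). ring. Qed.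

Lemma move_time_eager e k : look_time adv e z k + delay adv z k = start e z k.
Proof. rewrite look_time_eager, (proj2 (admissible_eager alpha adv z k adm)). ring. Qed.

Lemma gathers_on_cylinder_same_start (B : algorithm) : W = Z -> gathers_on_cylinder B adv.
Proof.
  intros HWZ.
  assert (Hinit : forall i, init adv i = Z).
  { intros i. destruct (robot_cases i z) as [-> | ->]; [reflexivity | exact HWZ]. }
  exists 0%nat, (fun _ _ _ => false). intros om _. split.
  - set (e := Execution (fun _ _ => 0) (fun _ _ => Z) (fun _ _ => Z)).
    exists e. split; [intros i; split; [reflexivity | symmetry; apply Hinit]|].
    intros i [|k] Hact.
    + apply valid_cycle_stop; reflexivity.
    + exfalso. apply (inactive_after_stop adv e i 0 (S k)); [reflexivity | lia | exact Hact].
  - intros e He.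
    destruct (execution_init B adv om e z He) as [Hz0 Hpz0].
    destruct (execution_init B adv om e w He) as [Hw0 Hpw0].
    assert (Hsz : stops_at adv e z 0).
    { unfold stops_at, snapshot. rewrite look_time_eager, Hz0, Hpz0, <- HWZ.
      apply (execution_rest_0 B adv om e w He). split; [lra|].
      pose proof (wait_nonneg 0). pose proof (delay_nonneg 0). lra. }
    assert (Hsw : stops_at adv e w 0).
    { unfold stops_at. rewrite snapshot_other, Hpw0, HWZ, <- Hpz0.
      apply (execution_stop B adv om e z 0 He (active_0 adv e z) Hsz).
      unfold look_time. rewrite Hz0, Hw0. pose proof (wait_nonneg 0). lra. }
    apply (gathered_intro adv e z 0 0); try apply active_0; try assumption.
    rewrite Hpz0, Hpw0. symmetry. exact HWZ.
Qed.

Section DistinctStarts.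

Hypothesis d_pos : 0 < d.

Let unit_L : unit_vector (direction W Z) := unit_direction W Z d_pos.
Let L_0 : L 0 = W := line_direction_0 W Z.
Let L_d : L d = Z := line_direction_dist W Z d_pos.

Let cycle_on_L om e i k a b a' M E :=
  valid_cycle_on_line (ratio alpha) adv om e i k W (direction W Z) a b a' M E frames unit_L.

Let execution_on_L om e i k a b a' M E He Hact :=
  execution_on_line (ratio alpha) adv om e i k W (direction W Z) a b a' M E He Hact frames unit_L.

Lemma other_rests_initially om e : is_execution A adv om e ->
  forall t, 0 <= t <= M0 -> pos e w t = L 0.
Proof. intros He t Ht. rewrite L_0. exact (execution_rest_0 A adv om e w He t Ht). Qed.

Let vz_div x : vz * (x / vz) = x.
Proof. field. lra. Qed.

Let vw_div x : vw * (x / vw) = x.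
Proof. field. lra. Qed.

Section Arrival.

Hypothesis arrives : d <= vz * M0.

Variable om : randomness.
Hypotheses (z_goes : ratio alpha (om z 0%nat) = 1) (w_stays : ratio alpha (om w 0%nat) = 0).

Definition arrival_execution : execution := Execution
  (by_robot z (fun k => match k with 0%nat => 0 | _ => d / vz end)
              (fun k => match k with 0%nat => 0 | _ => M0 end))
  (by_robot z (fun k => L (match k with 0%nat => d | _ => 0 end)) (fun _ => L 0))
  (by_robot z (fun t => L (ramp d 0 0 vz t)) (fun _ => L 0)).

Lemma arrival_execution_components :
  let e := arrival_execution in
  (forall k, start e z k = match k with 0%nat => 0 | _ => d / vz end) /\
  (forall k, spos e z k = L (match k with 0%nat => d | _ => 0 end)) /\
  (forall t, pos e z t = L (ramp d 0 0 vz t)) /\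
  (forall k, start e w k = match k with 0%nat => 0 | _ => M0 end) /\
  (forall k, spos e w k = L 0) /\ (forall t, pos e w t = L 0).
Proof. cbn. rewrite !by_robot_self, !by_robot_other. repeat split. Qed.

Lemma arrival_z_valid k : valid_cycle A adv om arrival_execution z k.
Proof.
  destruct arrival_execution_components as (Hs & Hp & Hq & _ & _ & Hqw).
  set (e := arrival_execution) in *.
  assert (Hend : forall t, d / vz <= t -> pos e z t = L 0).
  { intros t Ht. rewrite Hq, ramp_after; [reflexivity | exact vz_pos |].
    rewrite Rminus_0_r, Rabs_right by lra. lra. }
  destruct k as [|k].
  - apply (cycle_on_L om e z 0 d 0 0 0 (d / vz)); rewrite ?Hs, ?Hp.
    + reflexivity.
    + apply Hqw.
    + lra.
    + rewrite z_goes. ring.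
    + rewrite move_time_eager, Hs. reflexivity.
    + rewrite Rminus_0_r, Rabs_right by lra. lra.
    + repeat split; intros t Ht; rewrite Hq.
      * rewrite ramp_before by lra. reflexivity.
      * rewrite ramp_moving; [reflexivity | exact vz_pos |].
        rewrite Rminus_0_r, Rabs_right by lra. lra.
  - apply valid_cycle_stop.
    + unfold stops_at, snapshot. rewrite Hqw. symmetry. apply Hp.
    + intros t Ht. rewrite Hs in Ht. rewrite Hp. exact (Hend t Ht).
Qed.

Lemma arrival_w_valid k : active adv arrival_execution w k ->
  valid_cycle A adv om arrival_execution w k.
Proof.
  destruct arrival_execution_components as (_ & _ & Hq & Hs & Hp & Hqw).
  set (e := arrival_execution) in *. intros Hact. pose proof (vz_div d).
  assert (Hsees : forall k, snapshot adv e w k = L (ramp d 0 0 vz (look_time adv e w k)))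
    by (intros k'; rewrite snapshot_other; apply Hq).
  assert (Hlook : look_time adv e w 0 = wait adv w 0) by (unfold look_time; rewrite Hs; ring).
  destruct (Rle_lt_dec d (vz * wait adv w 0)) as [Hlate | Hearly].
  - assert (Hst : stops_at adv e w 0).
    { unfold stops_at. rewrite Hsees, Hlook, Hp, ramp_after; [reflexivity | exact vz_pos |].
      rewrite Rminus_0_r, Rabs_right by lra. nra. }
    destruct k as [|k].
    + apply valid_cycle_stop; [exact Hst|]. intros t _. rewrite Hqw. symmetry. apply Hp.
    + exfalso. exact (inactive_after_stop adv e w 0 (S k) Hst ltac:(lia) Hact).
  - destruct k as [|k].
    + apply (cycle_on_L om e w 0 0 (d - vz * wait adv w 0) 0 M0 M0).
      * apply Hp.
      * rewrite Hsees, Hlook, ramp_moving, toward_down; [f_equal; ring | lra | exact vz_pos |].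
        rewrite Rminus_0_r, Rabs_right by lra. pose proof (wait_nonneg 0). nra.
      * lra.
      * rewrite w_stays. ring.
      * rewrite Hlook. ring.
      * rewrite Rminus_diag, Rabs_R0. unfold Rdiv. ring.
      * rewrite Hs, Hp. repeat split; intros t _; rewrite Hqw; [reflexivity|].
        rewrite toward_self. reflexivity.
    + apply valid_cycle_stop.
      * unfold stops_at. rewrite Hsees, Hp, ramp_after; [reflexivity | exact vz_pos |].
        unfold look_time. rewrite Hs, Rminus_0_r, Rabs_right by lra.
        pose proof (wait_nonneg (S k)). nra.
      * intros t _. rewrite Hqw. symmetry. apply Hp.
Qed.

Lemma arrival_execution_valid : is_execution A adv om arrival_execution.
Proof.
  destruct arrival_execution_components as (Hs & Hp & _ & Hsw & Hpw & _).
  split.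
  - intros i. destruct (robot_cases i z) as [-> | ->].
    + rewrite Hs, Hp, L_d. auto.
    + rewrite Hsw, Hpw, L_0. auto.
  - intros i k Hact. destruct (robot_cases i z) as [-> | ->].
    + apply arrival_z_valid.
    + exact (arrival_w_valid k Hact).
Qed.

Lemma arrival_z_settles e : is_execution A adv om e ->
  active adv e z 1 /\ stops_at adv e z 1 /\ spos e z 1 = L 0 /\
  (forall t, 0 <= t <= d / vz -> pos e z t = L (d - vz * t)) /\
  (forall t, d / vz <= t -> pos e z t = L 0).
Proof.
  intros He.
  destruct (execution_init A adv om e z He) as [Hs0 Hp0]. rewrite <- L_d in Hp0.
  assert (Hsn : snapshot adv e z 0 = L 0).
  { unfold snapshot. rewrite look_time_eager, Hs0. apply (other_rests_initially om e He).
    pose proof (wait_nonneg 0). pose proof (delay_nonneg 0). lra. }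
  destruct (execution_on_L om e z 0 d 0 0 0 (d / vz) He (active_0 adv e z) Hp0 Hsn)
    as (Ha1 & Hs1 & Hp1 & Hmove).
  - lra.
  - rewrite z_goes. ring.
  - rewrite move_time_eager, Hs0. reflexivity.
  - rewrite Rminus_0_r, Rabs_right by lra. lra.
  - assert (Hst1 : stops_at adv e z 1).
    { unfold stops_at, snapshot. rewrite look_time_eager, Hs1, Hp1.
      apply (other_rests_initially om e He). pose proof (vz_div d).
      split; [apply Rlt_le, Rdiv_lt_0_compat |]; nra. }
    repeat split; try assumption.
    + intros t Ht. rewrite Hmove by exact Ht. rewrite toward_down by lra. f_equal. ring.
    + intros t Ht. rewrite <- Hp1. apply (execution_stop A adv om e z 1 He Ha1 Hst1).
      rewrite Hs1. exact Ht.
Qed.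

Lemma arrival_gathered e : is_execution A adv om e -> gathered adv e.
Proof.
  intros He.
  destruct (arrival_z_settles e He) as (Ha1 & Hst1 & Hp1 & Hmove & Hend).
  destruct (execution_init A adv om e w He) as [Hs0 Hp0]. rewrite <- L_0 in Hp0.
  assert (Hlook : look_time adv e w 0 = wait adv w 0) by (unfold look_time; rewrite Hs0; ring).
  pose proof (vz_div d) as Hdiv. pose proof (wait_nonneg 0).
  destruct (Rle_lt_dec d (vz * wait adv w 0)) as [Hlate | Hearly].
  - assert (Hsw0 : stops_at adv e w 0).
    { unfold stops_at. rewrite snapshot_other, Hlook, Hend, Hp0 by nra. reflexivity. }
    apply (gathered_intro adv e z 1 0); try assumption; [apply active_0 | congruence].
  - assert (Hsn : snapshot adv e w 0 = L (d - vz * wait adv w 0)).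
    { rewrite snapshot_other, Hlook. apply Hmove. nra. }
    destruct (execution_on_L om e w 0 0 (d - vz * wait adv w 0) 0 M0 M0 He (active_0 adv e w) Hp0 Hsn)
      as (Haw1 & Hsw1 & Hpw1 & _).
    + lra.
    + rewrite w_stays. ring.
    + rewrite Hlook. ring.
    + rewrite Rminus_diag, Rabs_R0. unfold Rdiv. ring.
    + assert (Hstw1 : stops_at adv e w 1).
      { unfold stops_at. rewrite snapshot_other, Hend, Hpw1; [reflexivity|].
        unfold look_time. rewrite Hsw1. pose proof (wait_nonneg 1). nra. }
      apply (gathered_intro adv e z 1 1); try assumption. congruence.
Qed.

End Arrival.

Lemma gathers_on_cylinder_arrival : d <= vz * M0 -> gathers_on_cylinder A adv.
Proof.
  intros Harr.
  exists 3%nat, (by_robot z (fun _ => bits3 true true false) (fun _ => bits3 true false false)).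
  intros om Hom.
  assert (Hz : ratio alpha (om z 0%nat) = 1).
  { rewrite (ratio_on_cylinder alpha 3 om _ z 0 ltac:(lia) ltac:(lia) Hom).
    rewrite by_robot_self. reflexivity. }
  assert (Hw : ratio alpha (om w 0%nat) = 0).
  { rewrite (ratio_on_cylinder alpha 3 om _ w 0 ltac:(lia) ltac:(lia) Hom).
    rewrite by_robot_other. reflexivity. }
  split.
  - exists arrival_execution. apply arrival_execution_valid; assumption.
  - intros e. apply arrival_gathered; assumption.
Qed.

Section Interception.

Hypothesis intercepts : vz * M0 < d.

Local Notation beta := (step_ratio alpha).
Local Notation t0 := (wait adv w 0).

Let beta_bounds : 0 < beta < 1 := step_ratio_bounds alpha alpha_pos.

Let speeds_related : vw = alpha * vz \/ vz = alpha * vw.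
Proof.
  pose proof (admissible_speed_ratio alpha adv z adm). destruct z; [left | right]; assumption.
Qed.

(* The [k]-th cycle of [z] starts at time [tau k], at distance [a k] from [W]. *)
Let a (k : nat) : R := d * (1 - beta) ^ k.
Let tau (k : nat) : R := (d - a k) / vz.

Let a_S k : a (S k) = (1 - beta) * a k.
Proof. unfold a. cbn [pow]. ring. Qed.

Let a_pos k : 0 < a k.
Proof. unfold a. apply Rmult_lt_0_compat; [lra | apply pow_lt; lra]. Qed.

Let a_antitone k m : (k <= m)%nat -> a m <= a k.
Proof.
  induction 1 as [|m _ IH]; [lra|]. rewrite a_S. pose proof (a_pos m). nra.
Qed.

Let vz_tau k : vz * tau k = d - a k.
Proof. apply vz_div. Qed.

Let tau_nonneg k : 0 <= tau k.
Proof.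
  pose proof (a_antitone 0 k ltac:(lia)). pose proof (vz_tau k).
  replace (a 0%nat) with d in * by (unfold a; cbn [pow]; ring). nra.
Qed.

Lemma first_late_cycle : exists n, (forall k, (k < n)%nat -> tau k < M0) /\ M0 <= tau n.
Proof.
  assert (Hex : exists n, M0 <= tau n).
  { destruct (pow_lt_1_zero (1 - beta) ltac:(rewrite Rabs_right; lra) ((d - vz * M0) / d))
      as [N HN]; [apply Rdiv_lt_0_compat; lra|].
    exists N. specialize (HN N (le_n N)). rewrite Rabs_right in HN by (apply Rle_ge, pow_le; lra).
    assert (a N < d - vz * M0).
    { unfold a. replace (d - vz * M0) with (d * ((d - vz * M0) / d)) by (field; lra).
      apply Rmult_lt_compat_l; lra. }
    pose proof (vz_tau N). nra. }
  destruct (dec_inh_nat_subset_has_unique_least_element (fun n => M0 <= tau n)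
             (fun n => classic _) Hex) as [n [[Hn Hmin] _]].
  exists n. split; [|exact Hn].
  intros k Hk. apply Rnot_le_lt. intros Hle. specialize (Hmin k Hle). lia.
Qed.

Section Meeting.

Variable n : nat.
Hypotheses (early : forall k, (k < n)%nat -> tau k < M0) (late : M0 <= tau n).

(* [w] sees [z] at [x0] and reaches it at time [E0]; in cycle [n], [z] sees [w] at [y]; they
   cross at [p] at time [tm]. *)
Let x0 : R := d - vz * t0.
Let E0 : R := M0 + x0 / vw.
Let y : R := (tau n - M0) * vw.
Let c : R := vz / (vz + vw).
Let p : R := a n + c * (y - a n).
Let tm : R := (d - p) / vz.

Let t0_bounds : 0 <= t0 <= M0.
Proof. pose proof (wait_nonneg 0). pose proof (delay_nonneg 0). lra. Qed.

Let tau_le_n k : (k <= n)%nat -> tau k <= tau n.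
Proof.
  intros Hk. pose proof (a_antitone k n Hk). pose proof (vz_tau k). pose proof (vz_tau n). nra.
Qed.

Let a_n_le_x0 : a n <= x0.
Proof. pose proof (vz_tau n). unfold x0. nra. Qed.

(* [w] has not passed [z] yet: it starts moving during the last step of [z], which lasts
   [beta * a (n - 1) / vz], and in that time it covers at most
   [vw * beta * a (n - 1) / vz <= (1 - beta) * a (n - 1) = a n]. *)
Let y_lt_a_n : y < a n.
Proof.
  destruct (Nat.eq_dec n 0) as [Hn0 | Hn0].
  - assert (Htau0 : tau 0%nat = 0) by (unfold tau, a; cbn [pow]; field; lra).
    assert (HM0 : M0 = 0) by (rewrite Hn0, Htau0 in late; lra).
    unfold y. rewrite Hn0, Htau0, HM0. pose proof (a_pos 0). lra.
  - set (m := pred n). assert (Hm : n = S m) by lia.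
    assert (Hm' : tau m < M0) by (apply early; lia).
    assert (Hstep : vz * (tau (S m) - tau m) = beta * a m)
      by (rewrite Rmult_minus_distr_l, !vz_tau, a_S; ring).
    assert (Hbeta : beta * vw <= (1 - beta) * vz)
      by (apply step_ratio_speeds; [assumption .. | destruct speeds_related; auto]).
    assert (Hy : vz * y < vw * (beta * a m)) by (unfold y; rewrite Hm, <- Hstep; pose proof (Rmult_lt_0_compat vz vw vz_pos vw_pos); nra).
    assert (vw * (beta * a m) <= vz * a (S m)) by (rewrite a_S; pose proof (a_pos m); nra).
    rewrite Hm. apply Rmult_lt_reg_l with vz; lra.
Qed.

Let c_bounds : 0 < c < 1.
Proof.
  unfold c. split; [apply Rdiv_lt_0_compat; lra|].
  apply Rmult_lt_reg_r with (vz + vw); [lra|]. unfold Rdiv. rewrite Rmult_assoc, Rinv_l; lra.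
Qed.

Let p_bounds : y < p < a n.
Proof. unfold p. pose proof y_lt_a_n. pose proof c_bounds. nra. Qed.

Let x0_pos : 0 < x0.
Proof. pose proof (a_pos n). pose proof a_n_le_x0. lra. Qed.

Let vz_tm : vz * tm = d - p.
Proof. apply vz_div. Qed.

Let meeting_point : (tm - M0) * vw = p.
Proof. unfold tm, p, c, y, tau. field. lra. Qed.

Let tm_bounds : tau n <= tm < E0.
Proof.
  pose proof p_bounds. pose proof a_n_le_x0. pose proof (vz_tau n). pose proof (vw_div x0).
  pose proof meeting_point. unfold E0. split; nra.
Qed.

Let M1 : R := E0 + wait adv w 1 + delay adv w 1.
Let E1 : R := M1 + (x0 - p) / vw.

Let E0_def : E0 = M0 + x0 / vw := eq_refl.
Let M1_def : M1 = E0 + wait adv w 1 + delay adv w 1 := eq_refl.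
Let E1_def : E1 = M1 + (x0 - p) / vw := eq_refl.

Let z_path_moving t : 0 <= t <= tm -> ramp d p 0 vz t = d - vz * t.
Proof.
  intros Ht. pose proof p_bounds. pose proof (a_antitone 0 n ltac:(lia)).
  assert (Ha0 : a 0%nat = d) by (unfold a; cbn [pow]; ring).
  rewrite ramp_moving, toward_down; [ring | lra | exact vz_pos |].
  rewrite Rplus_0_l, Rabs_right by lra. exact Ht.
Qed.

Let z_path_after t : tm <= t -> ramp d p 0 vz t = p.
Proof.
  intros Ht. pose proof p_bounds. pose proof (a_antitone 0 n ltac:(lia)).
  assert (Ha0 : a 0%nat = d) by (unfold a; cbn [pow]; ring).
  apply ramp_after; [exact vz_pos|]. rewrite Rplus_0_l, Rabs_right by lra. exact Ht.
Qed.

Let w_path (t : R) : R := if Rle_dec t E0 then ramp 0 x0 M0 vw t else ramp x0 p M1 vw t.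

Let w_path_early t : t <= E0 -> w_path t = ramp 0 x0 M0 vw t.
Proof. intros Ht. unfold w_path. destruct (Rle_dec t E0); [reflexivity | lra]. Qed.

Let w_path_late t : E0 <= t -> w_path t = ramp x0 p M1 vw t.
Proof.
  intros Ht. unfold w_path. destruct (Rle_dec t E0) as [Hle|]; [|reflexivity].
  replace t with E0 by lra. pose proof x0_pos.
  assert (Habs : Rabs (0 - x0) = x0) by (rewrite Rminus_0_l, Rabs_Ropp, Rabs_right; lra).
  pose proof (wait_nonneg 1). pose proof (delay_nonneg 1). pose proof E0_def. pose proof M1_def.
  rewrite ramp_after, ramp_before by (exact vw_pos || (rewrite ?Habs; lra)).
  reflexivity.
Qed.

Let w_path_out t : M0 <= t <= E0 -> w_path t = (t - M0) * vw.
Proof.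
  intros Ht. pose proof x0_pos.
  assert (Habs : Rabs (0 - x0) = x0) by (rewrite Rminus_0_l, Rabs_Ropp, Rabs_right; lra).
  pose proof E0_def.
  rewrite w_path_early, ramp_moving, toward_up by (exact vw_pos || (rewrite ?Habs; lra)). ring.
Qed.

Let w_path_rest t : t <= M0 -> w_path t = 0.
Proof.
  intros Ht. pose proof x0_pos. pose proof (vw_div x0). pose proof E0_def.
  rewrite w_path_early, ramp_before by nra. reflexivity.
Qed.

Let w_path_parked t : E0 <= t <= M1 -> w_path t = x0.
Proof. intros Ht. rewrite w_path_late, ramp_before by lra. reflexivity. Qed.

Let w_path_back t : M1 <= t <= E1 -> w_path t = toward x0 p ((t - M1) * vw).
Proof.
  intros Ht. pose proof p_bounds. pose proof a_n_le_x0.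
  pose proof (wait_nonneg 1). pose proof (delay_nonneg 1).
  rewrite w_path_late, ramp_moving; [reflexivity | exact vw_pos | | lra].
  rewrite Rabs_right by lra. lra.
Qed.

Let w_path_end t : E1 <= t -> w_path t = p.
Proof.
  intros Ht. pose proof p_bounds. pose proof a_n_le_x0. pose proof (vw_div (x0 - p)).
  pose proof (wait_nonneg 1). pose proof (delay_nonneg 1).
  rewrite w_path_late, ramp_after; [reflexivity | exact vw_pos | | nra].
  rewrite Rabs_right by lra. lra.
Qed.

Let z_cycle_pos (k : nat) : R := if (k <=? n)%nat then a k else p.

Definition meeting_execution : execution := Execution
  (by_robot z (fun k => (d - z_cycle_pos k) / vz)
              (fun k => match k with 0%nat => 0 | 1%nat => E0 | _ => E1 end))
  (by_robot z (fun k => L (z_cycle_pos k))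
              (fun k => L (match k with 0%nat => 0 | 1%nat => x0 | _ => p end)))
  (by_robot z (fun t => L (ramp d p 0 vz t)) (fun t => L (w_path t))).

Lemma meeting_execution_components :
  let e := meeting_execution in
  (forall k, start e z k = (d - z_cycle_pos k) / vz) /\
  (forall k, spos e z k = L (z_cycle_pos k)) /\
  (forall t, pos e z t = L (ramp d p 0 vz t)) /\
  (forall k, start e w k = match k with 0%nat => 0 | 1%nat => E0 | _ => E1 end) /\
  (forall k, spos e w k = L (match k with 0%nat => 0 | 1%nat => x0 | _ => p end)) /\
  (forall t, pos e w t = L (w_path t)).
Proof. cbn. rewrite !by_robot_self, !by_robot_other. repeat split. Qed.

Let z_cycle_pos_le k : (k <= n)%nat -> z_cycle_pos k = a k.
Proof. intros Hk. unfold z_cycle_pos. apply Nat.leb_le in Hk. rewrite Hk. reflexivity. Qed.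

Let z_cycle_pos_gt k : (n < k)%nat -> z_cycle_pos k = p.
Proof. intros Hk. unfold z_cycle_pos. apply Nat.leb_gt in Hk. rewrite Hk. reflexivity. Qed.

Let z_seen_by_w : ramp d p 0 vz t0 = x0.
Proof. pose proof tm_bounds. apply z_path_moving. lra. Qed.

Let w_behind_z k : (k <= n)%nat -> w_path (tau k) < a k.
Proof.
  intros Hk. pose proof (tau_le_n k Hk). pose proof tm_bounds.
  destruct (Nat.eq_dec k n) as [-> | Hkn].
  - rewrite w_path_out by lra. exact y_lt_a_n.
  - rewrite w_path_rest by (apply Rlt_le, early; lia). apply a_pos.
Qed.

Let z_next_lt k : (k <= n)%nat -> z_cycle_pos (S k) < a k.
Proof.
  intros Hk. destruct (Nat.eq_dec k n) as [-> | Hkn].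
  - rewrite z_cycle_pos_gt by lia. apply p_bounds.
  - rewrite z_cycle_pos_le, a_S by lia. pose proof (a_pos k). nra.
Qed.

Lemma meeting_z_stops : stops_at adv meeting_execution z (S n).
Proof.
  destruct meeting_execution_components as (Hs & Hp & _ & _ & _ & Hqw).
  pose proof tm_bounds. pose proof late.
  unfold stops_at, snapshot. rewrite look_time_eager, Hs, Hp, Hqw, z_cycle_pos_gt by lia.
  change ((d - p) / vz) with tm. rewrite w_path_out by lra. f_equal. exact meeting_point.
Qed.

Lemma meeting_w_sees_z_parked k : tm <= look_time adv meeting_execution w k ->
  snapshot adv meeting_execution w k = L p.
Proof.
  destruct meeting_execution_components as (_ & _ & Hq & _ & _ & _).
  intros Hk. rewrite snapshot_other, Hq, z_path_after by exact Hk. reflexivity.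
Qed.

Lemma meeting_w_stops : stops_at adv meeting_execution w 2.
Proof.
  destruct meeting_execution_components as (_ & _ & _ & Hs & Hp & _).
  pose proof tm_bounds. pose proof p_bounds. pose proof a_n_le_x0. pose proof (vw_div (x0 - p)).
  pose proof (wait_nonneg 1). pose proof (delay_nonneg 1). pose proof (wait_nonneg 2).
  pose proof E0_def. pose proof M1_def. pose proof E1_def.
  unfold stops_at. rewrite meeting_w_sees_z_parked, Hp; [reflexivity|].
  unfold look_time. rewrite Hs. nra.
Qed.

Section Bits.

Variable om : randomness.
Hypotheses (z_steps : forall k, (k < n)%nat -> ratio alpha (om z k) = beta)
           (z_meets : ratio alpha (om z n) = c)
           (w_follows : forall k, (k < 2)%nat -> ratio alpha (om w k) = 1).

Let z_next_target k : (k <= n)%nat ->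
  z_cycle_pos (S k) = a k + ratio alpha (om z k) * (w_path (tau k) - a k).
Proof.
  intros Hk. pose proof (tau_le_n k Hk). pose proof tm_bounds.
  destruct (Nat.eq_dec k n) as [-> | Hkn].
  - rewrite z_cycle_pos_gt, z_meets, w_path_out by (lia || lra). reflexivity.
  - rewrite z_cycle_pos_le, a_S, z_steps, w_path_rest by (try apply Rlt_le, early; lia). ring.
Qed.

Lemma meeting_z_moves k : (k <= n)%nat -> valid_cycle A adv om meeting_execution z k.
Proof.
  intros Hk.
  destruct meeting_execution_components as (Hs & Hp & Hq & _ & _ & Hqw).
  set (e := meeting_execution) in *.
  pose proof (z_next_lt k Hk). pose proof (w_behind_z k Hk). pose proof (tau_le_n k Hk).
  assert (Hnext : (d - z_cycle_pos (S k)) / vz <= tm).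
  { destruct (Nat.eq_dec k n) as [-> | Hkn].
    - rewrite z_cycle_pos_gt by lia. apply Rle_refl.
    - rewrite z_cycle_pos_le by lia. pose proof (tau_le_n (S k) ltac:(lia)). pose proof tm_bounds.
      unfold tau in *. lra. }
  assert (Hstart : start e z k = tau k) by (rewrite Hs, z_cycle_pos_le; auto).
  apply (cycle_on_L om e z k (a k) (w_path (tau k)) (z_cycle_pos (S k)) (tau k)
           ((d - z_cycle_pos (S k)) / vz)).
  - rewrite Hp, z_cycle_pos_le; auto.
  - unfold snapshot. rewrite look_time_eager, Hstart. apply Hqw.
  - lra.
  - apply z_next_target, Hk.
  - rewrite move_time_eager. symmetry. exact Hstart.
  - rewrite Rabs_right by lra. unfold tau. field. lra.
  - pose proof (vz_tau k). pose proof tm_bounds. pose proof (tau_nonneg k).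
    repeat split; [apply Hs | apply Hp | |]; intros t Ht; rewrite ?Hstart in Ht;
      rewrite Hq, z_path_moving by lra.
    + f_equal. nra.
    + rewrite toward_down by lra. f_equal. nra.
Qed.

Lemma meeting_z_valid k : active adv meeting_execution z k ->
  valid_cycle A adv om meeting_execution z k.
Proof.
  intros Hact. destruct meeting_execution_components as (Hs & Hp & Hq & _ & _ & _).
  destruct (Nat.le_gt_cases k n) as [Hk | Hk]; [exact (meeting_z_moves k Hk)|].
  destruct (Nat.eq_dec k (S n)) as [-> | Hk'].
  - apply valid_cycle_stop; [exact meeting_z_stops|].
    intros t Ht. rewrite Hs, z_cycle_pos_gt in Ht by lia.
    rewrite Hp, Hq, z_path_after, z_cycle_pos_gt by (lia || exact Ht). reflexivity.
  - exfalso. exact (inactive_after_stop _ _ z (S n) k meeting_z_stops ltac:(lia) Hact).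
Qed.

Lemma meeting_w_valid k : active adv meeting_execution w k ->
  valid_cycle A adv om meeting_execution w k.
Proof.
  intros Hact. destruct meeting_execution_components as (_ & _ & Hq & Hs & Hp & Hqw).
  set (e := meeting_execution) in *.
  pose proof tm_bounds. pose proof p_bounds. pose proof a_n_le_x0. pose proof x0_pos.
  destruct k as [|[|[|k]]].
  - apply (cycle_on_L om e w 0 0 x0 x0 M0 E0).
    + apply Hp.
    + rewrite snapshot_other, Hq. unfold look_time. rewrite Hs, Rplus_0_l, z_seen_by_w. reflexivity.
    + lra.
    + rewrite w_follows by lia. ring.
    + unfold look_time. rewrite Hs. ring.
    + rewrite Rminus_0_l, Rabs_Ropp, Rabs_right by lra. reflexivity.
    + repeat split; [apply Hs | apply Hp | |]; intros t Ht; rewrite Hqw.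
      * rewrite Hs in Ht. rewrite w_path_rest by lra. reflexivity.
      * rewrite w_path_out by lra. rewrite toward_up by lra. f_equal. ring.
  - apply (cycle_on_L om e w 1 x0 p p M1 E1).
    + apply Hp.
    + apply meeting_w_sees_z_parked. unfold look_time. rewrite Hs. pose proof (wait_nonneg 1). lra.
    + lra.
    + rewrite w_follows by lia. ring.
    + unfold look_time. rewrite Hs. reflexivity.
    + rewrite Rabs_right by lra. reflexivity.
    + repeat split; [apply Hs | apply Hp | |]; intros t Ht; rewrite Hqw.
      * rewrite Hs in Ht. rewrite w_path_parked by exact Ht. reflexivity.
      * rewrite w_path_back by exact Ht. reflexivity.
  - apply valid_cycle_stop; [exact meeting_w_stops|].
    intros t Ht. rewrite Hs in Ht. rewrite Hqw, Hp, w_path_end by exact Ht. reflexivity.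
  - exfalso. exact (inactive_after_stop _ _ w 2 (S (S (S k))) meeting_w_stops ltac:(lia) Hact).
Qed.

Lemma meeting_execution_valid : is_execution A adv om meeting_execution.
Proof.
  destruct meeting_execution_components as (Hs & Hp & _ & Hsw & Hpw & _).
  split.
  - intros i. destruct (robot_cases i z) as [-> | ->].
    + rewrite Hs, Hp, z_cycle_pos_le by lia.
      replace (a 0%nat) with d by (unfold a; cbn [pow]; ring).
      rewrite L_d, Rminus_diag. unfold Rdiv. split; [ring | reflexivity].
    + rewrite Hsw, Hpw, L_0. auto.
  - intros i k Hact. destruct (robot_cases i z) as [-> | ->].
    + exact (meeting_z_valid k Hact).
    + exact (meeting_w_valid k Hact).
Qed.

Lemma meeting_z_approach e : is_execution A adv om e -> forall k, (k <= n)%nat ->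
  active adv e z k /\ start e z k = tau k /\ spos e z k = L (a k) /\
  (forall t, 0 <= t <= tau k -> pos e z t = L (d - vz * t)).
Proof.
  intros He k. induction k as [|k IH]; intros Hk.
  - destruct (execution_init A adv om e z He) as [Hs0 Hp0].
    assert (Ha0 : a 0%nat = d) by (unfold a; cbn [pow]; ring).
    assert (Htau0 : tau 0%nat = 0) by (unfold tau; rewrite Ha0, Rminus_diag; unfold Rdiv; ring).
    rewrite Ha0, Htau0, L_d. split; [apply active_0 | split; [exact Hs0 | split; [exact Hp0|]]].
    intros t Ht. replace (d - vz * t) with d by nra. rewrite L_d, <- Hp0.
    apply (execution_rest A adv om e z 0 He (active_0 adv e z)).
    rewrite move_time_eager, Hs0. lra.
  - destruct (IH ltac:(lia)) as (Ha & Hs & Hp & Hpos).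
    assert (Hearly : tau k < M0) by (apply early; lia).
    assert (Hsn : snapshot adv e z k = L 0).
    { unfold snapshot. rewrite look_time_eager, Hs. apply (other_rests_initially om e He).
      pose proof (tau_nonneg k). lra. }
    pose proof (a_pos k). pose proof (vz_tau k). pose proof (vz_tau (S k)).
    destruct (execution_on_L om e z k (a k) 0 (a (S k)) (tau k) (tau (S k)) He Ha Hp Hsn)
      as (Ha' & Hs' & Hp' & Hmove).
    + lra.
    + rewrite a_S, z_steps by lia. ring.
    + rewrite move_time_eager. symmetry. exact Hs.
    + rewrite a_S, Rabs_right by nra. apply Rmult_eq_reg_l with vz; [|lra].
      rewrite vz_tau, Rmult_plus_distr_l, vz_tau, vz_div, a_S. ring.
    + repeat split; try assumption. intros t Ht.
      destruct (Rle_dec t (tau k)) as [Hle | Hgt]; [apply Hpos; lra|].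
      rewrite Hmove, toward_down by (rewrite ?a_S; nra). f_equal. nra.
Qed.

Lemma meeting_w_sets_out e : is_execution A adv om e ->
  active adv e w 1 /\ start e w 1 = E0 /\ spos e w 1 = L x0 /\
  (forall t, M0 <= t <= E0 -> pos e w t = L ((t - M0) * vw)).
Proof.
  intros He.
  destruct (meeting_z_approach e He n (le_n n)) as (_ & _ & _ & Hz).
  destruct (execution_init A adv om e w He) as [Hs0 Hp0]. rewrite <- L_0 in Hp0.
  assert (Hlook : look_time adv e w 0 = t0) by (unfold look_time; rewrite Hs0; ring).
  assert (Hsn : snapshot adv e w 0 = L x0).
  { rewrite snapshot_other, Hlook, Hz; [reflexivity|]. pose proof tm_bounds. lra. }
  pose proof x0_pos.
  destruct (execution_on_L om e w 0 0 x0 x0 M0 E0 He (active_0 adv e w) Hp0 Hsn)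
    as (Ha1 & Hs1 & Hp1 & Hmove).
  - lra.
  - rewrite w_follows by lia. ring.
  - rewrite Hlook. reflexivity.
  - rewrite Rminus_0_l, Rabs_Ropp, Rabs_right by lra. reflexivity.
  - repeat split; try assumption. intros t Ht.
    rewrite Hmove, toward_up by lra. f_equal. ring.
Qed.

Lemma meeting_z_settles e : is_execution A adv om e ->
  active adv e z (S n) /\ stops_at adv e z (S n) /\ spos e z (S n) = L p /\
  (forall t, tm <= t -> pos e z t = L p).
Proof.
  intros He.
  destruct (meeting_z_approach e He n (le_n n)) as (Ha & Hs & Hp & _).
  destruct (meeting_w_sets_out e He) as (_ & _ & _ & Hw).
  pose proof tm_bounds. pose proof p_bounds. pose proof late.
  assert (Hsn : snapshot adv e z n = L y).
  { unfold snapshot. rewrite look_time_eager, Hs, Hw by lra. reflexivity. }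
  destruct (execution_on_L om e z n (a n) y p (tau n) tm He Ha Hp Hsn)
    as (Ha' & Hs' & Hp' & _).
  - lra.
  - rewrite z_meets. reflexivity.
  - rewrite move_time_eager, Hs. reflexivity.
  - rewrite Rabs_right by lra. apply Rmult_eq_reg_l with vz; [|lra].
    rewrite vz_tm, Rmult_plus_distr_l, vz_tau, vz_div. ring.
  - assert (Hst : stops_at adv e z (S n)).
    { unfold stops_at, snapshot. rewrite look_time_eager, Hs', Hp', Hw by lra.
      rewrite meeting_point. reflexivity. }
    repeat split; try assumption. intros t Ht. rewrite <- Hp'.
    apply (execution_stop A adv om e z (S n) He Ha' Hst). lra.
Qed.

Lemma meeting_gathered e : is_execution A adv om e -> gathered adv e.
Proof.
  intros He.
  destruct (meeting_z_settles e He) as (Hza & Hzst & Hzp & Hzend).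
  destruct (meeting_w_sets_out e He) as (Ha1 & Hs1 & Hp1 & _).
  pose proof tm_bounds. pose proof p_bounds. pose proof a_n_le_x0.
  pose proof (wait_nonneg 1). pose proof (wait_nonneg 2).
  assert (Hsn : snapshot adv e w 1 = L p).
  { rewrite snapshot_other, Hzend; [reflexivity|]. unfold look_time. rewrite Hs1. lra. }
  destruct (execution_on_L om e w 1 x0 p p M1 (M1 + (x0 - p) / vw) He Ha1 Hp1 Hsn)
    as (Ha2 & Hs2 & Hp2 & _).
  - lra.
  - rewrite w_follows by lia. ring.
  - unfold look_time. rewrite Hs1. reflexivity.
  - rewrite Rabs_right by lra. reflexivity.
  - assert (Hst2 : stops_at adv e w 2).
    { unfold stops_at. rewrite snapshot_other, Hzend, Hp2; [reflexivity|].
      unfold look_time. rewrite Hs2. pose proof (vw_div (x0 - p)).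
      pose proof (delay_nonneg 1). pose proof E0_def. pose proof M1_def. nra. }
    apply (gathered_intro adv e z (S n) 2); try assumption. congruence.
Qed.

End Bits.

Lemma gathers_on_cylinder_meeting : gathers_on_cylinder A adv.
Proof.
  set (rho := by_robot z (fun k => if (k <? n)%nat then bits3 false true true else meet_bits z)
                         (fun _ => bits3 true true false)).
  exists (n + 3)%nat, rho. intros om Hom.
  assert (Hr : forall i k, (k < n + 3)%nat -> ratio alpha (om i k) = ratio alpha (rho i k))
    by (intros i k Hk; apply (ratio_on_cylinder alpha (n + 3) om rho); assumption || lia).
  assert (z_steps : forall k, (k < n)%nat -> ratio alpha (om z k) = beta).
  { intros k Hk. rewrite Hr by lia. unfold rho. rewrite by_robot_self.
    apply Nat.ltb_lt in Hk. rewrite Hk. reflexivity. }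
  assert (z_meets : ratio alpha (om z n) = c).
  { rewrite Hr by lia. unfold rho. rewrite by_robot_self, Nat.ltb_irrefl.
    apply ratio_meet_bits; [exact alpha_pos | apply (admissible_speed alpha adv z true adm) |].
    exact (admissible_speed_ratio alpha adv z adm). }
  assert (w_follows : forall k, (k < 2)%nat -> ratio alpha (om w k) = 1).
  { intros k Hk. rewrite Hr by lia. unfold rho. rewrite by_robot_other. reflexivity. }
  split.
  - exists meeting_execution. apply meeting_execution_valid; assumption.
  - intros e. apply meeting_gathered; assumption.
Qed.

End Meeting.

Lemma gathers_on_cylinder_interception : gathers_on_cylinder A adv.
Proof.
  destruct first_late_cycle as (n & Hearly & Hlate).
  exact (gathers_on_cylinder_meeting n Hearly Hlate).
Qed.

End Interception.

End DistinctStarts.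
End Scenarios.

Theorem theorem4 :
  forall alpha : R, 0 < alpha ->
  exists A : algorithm,
  forall (adv : adversary) (z : bool), admissible alpha adv z ->
  exists (N : nat) (rho : randomness),
  forall om : randomness,
    (forall i k j, (k < N)%nat -> (j < N)%nat -> om i k j = rho i k j) ->
    (exists e, is_execution A adv om e) /\
    (forall e, is_execution A adv om e -> gathered adv e).
Proof.
  intros alpha Halpha. exists (gathering_algorithm alpha). intros adv z Hadm.
  set (W := init adv (negb z)). set (Z := init adv z).
  destruct (Req_dec (dist W Z) 0) as [Hsame | Hsep].
  - exact (gathers_on_cylinder_same_start alpha adv z Hadm _ (dist_eq0 W Z Hsame)).
  - assert (Hd : 0 < dist W Z) by (pose proof (dist_nonneg W Z); lra).
    destruct (Rle_lt_dec (dist W Z) (speed adv z * (wait adv (negb z) 0 + delay adv (negb z) 0)))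
      as [Harrives | Hintercepts].
    + exact (gathers_on_cylinder_arrival alpha adv z Hadm Hd Harrives).
    + exact (gathers_on_cylinder_interception alpha adv z Halpha Hadm Hd Hintercepts).
Qed.
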